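(* There exists a constant $\widetilde c>0$ such that for all $N$ large enough, all $n\in\mathbb{Z}_+$ and every initial law of $X(0)$, a Markov chain $X$ on $\{0,\dots,N-4\}$ with kernel $\check P$ satisfies $$\mathbb{P}[\tau_0^X>n]\le e^{1-\widetilde c n/N^3},\qquad \tau_0^X=\inf\{n\in\mathbb{Z}_+: X(n)=0\}.$$
   Context: For $\sigma\in\mathcal{S}_N$ let $\eta_1(\sigma)$, $\eta_2(\sigma)$ be its numbers of fixed points and 2-cycles, $\nu$ the uniform measure on $\mathcal{S}_N$ and $p(x)=\mathbb{E}_\nu[\eta_2\mid\eta_1=x]$. $\check P$ is the birth–death Markov kernel on $\{0,\dots,N-4\}$ with $\check P(x,x-1)=\frac{x(N-x)}{N(N-1)}$, $\check P(x,x+1)=\frac{N-x-2p(x)}{N(N-1)}$ for $x\le N-5$, all other off-diagonal entries $0$, and diagonal entries making rows sum to 1. *)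

From HB Require Import structures.
From mathcomp Require Import all_boot all_order all_algebra all_fingroup.
From mathcomp Require Import all_classical all_reals.
From mathcomp Require Import topology normedtype sequences.
Set Implicit Arguments. Unset Strict Implicit. Unset Printing Implicit Defensive.
Import Order.TTheory GRing.Theory Num.Theory.
Local Open Scope ring_scope.

Definition eta1 (N : nat) (s : 'S_N) : nat := #|[set i | s i == i]|.

Definition eta2 (N : nat) (s : 'S_N) : nat :=
  #|[set C in porbits s | #|C| == 2%N]|.

(* p(x) = E_nu[eta2 | eta1 = x], nu uniform on S_N *)
Definition pcond (R : realType) (N x : nat) : R :=
  (\sum_(s : 'S_N | eta1 s == x) (eta2 s)%:R) / (#|[set s : 'S_N | eta1 s == x]|)%:R.

(* States {0,...,N-4} represented by 'I_(N-3). *)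
Definition down_rate (R : realType) (N x : nat) : R :=
  if (0 < x)%N then (x * (N - x))%:R / (N * (N - 1))%:R else 0.

Definition up_rate (R : realType) (N x : nat) : R :=
  if (x <= N - 5)%N then
    ((N%:R - x%:R - 2 * pcond R N x) / (N * (N - 1))%:R) else 0.

Definition checkP (R : realType) (N : nat) (x y : 'I_(N - 3)) : R :=
  if y == x then 1 - down_rate R N x - up_rate R N x
  else if (y : nat) == x.-1 then down_rate R N x
  else if (y : nat) == x.+1 then up_rate R N x
  else 0.

(* P[tau_0 > n] for the Markov chain with kernel checkP and initial law mu:
   the probability (under the law of the chain) that X(0),...,X(n) are all
   different from 0. *)
Definition survival (R : realType) (N n : nat) (mu : 'I_(N - 3) -> R) : R :=
  \sum_(w : {ffun 'I_n.+1 -> 'I_(N - 3)} | [forall i, (w i : nat) != 0%N])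
     mu (w ord0) * \prod_(i < n) checkP R (w (inord i)) (w (inord i.+1)).

From HB Require Import structures.
From mathcomp Require Import all_boot all_order all_algebra all_fingroup.
From mathcomp Require Import all_classical all_reals.
From mathcomp Require Import topology normedtype sequences exp.
From mathcomp Require Import lra zify ring.
Set Implicit Arguments. Unset Strict Implicit. Unset Printing Implicit Defensive.
Import Order.TTheory GRing.Theory Num.Theory.
Local Open Scope ring_scope.

(* The tail P[tau_0 > n] is the mass of the chain killed on
   hitting 0, so it is bounded by a Lyapunov (drift) argument:
   - for any kernel K on a finite set, killed outside a set of "alive" states,
     a function H >= 1 with  sum_{y alive} K x y H y <= a H x  on alive states
     gives  P[alive up to time n] <= a^n E[H(X(0))]  (path_mass_drift);
   - for the kernel checkP we take H(x) = (N + x - 1)/N in [1, 2] and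
     a = 1 - 1/N^3.  The drift inequality reduces to an elementary estimate on
     the rates, which rests on the combinatorial bound 2 eta2 + eta1 <= N,
     hence 2 p(x) <= N - x (so the up-rate is at most (N-x)/(N(N-1)));
   - finally 2 (1 - 1/N^3)^n <= e * exp(-n/N^3), giving the claim with c = 1
     for N >= 10. *)

Section KilledPaths.
Variables (R : realType) (T : finType) (K : T -> T -> R) (alive : pred T).

Definition path_mass (n : nat) (mu : T -> R) : R :=
  \sum_(w : {ffun 'I_n.+1 -> T} | [forall i, alive (w i)])
     mu (w ord0) * \prod_(i < n) K (w (inord i)) (w (inord i.+1)).

Lemma path_mass0 (mu : T -> R) : path_mass 0 mu = \sum_(x | alive x) mu x.
Proof.
pose const (x : T) : {ffun 'I_1 -> T} := [ffun=> x].
have constK : cancel const (fun w => w ord0) by move=> x; rewrite ffunE.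
have constV : cancel (fun w : {ffun 'I_1 -> T} => w ord0) const.
  by move=> w; apply/ffunP => i; rewrite ffunE (ord1 i).
rewrite /path_mass (reindex const); last by exists (fun w : {ffun 'I_1 -> T} => w ord0).
apply: eq_big => [x|x _]; last by rewrite big_ord0 mulr1 ffunE.
by apply/forallP/idP => [/(_ ord0)|? i]; rewrite ffunE.
Qed.

Lemma path_massS (n : nat) (mu : T -> R) :
  path_mass n.+1 mu =
  path_mass n (fun y => \sum_(x | alive x) mu x * K x y).
Proof.
pose cons (p : T * {ffun 'I_n.+1 -> T}) : {ffun 'I_n.+2 -> T} :=
  [ffun j => if unlift ord0 j is Some k then p.2 k else p.1].
pose uncons (w : {ffun 'I_n.+2 -> T}) := (w ord0, [ffun k => w (lift ord0 k)]).
have consK : cancel cons uncons.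
  case=> x w; rewrite /uncons /cons /= ffunE unlift_none; congr pair.
  by apply/ffunP => k; rewrite !ffunE liftK.
have unconsK : cancel uncons cons.
  move=> w; apply/ffunP => j; rewrite /cons /uncons ffunE.
  by case: (unliftP ord0 j) => [k ->|->] /=; rewrite ?ffunE.
have cons_lift j p : cons p (lift ord0 j) = p.2 j by rewrite ffunE liftK.
have cons0 p : cons p ord0 = p.1 by rewrite ffunE unlift_none.
have inord_lift k : (k < n.+1)%N -> (inord k.+1 : 'I_n.+2) = lift ord0 (inord k).
  by move=> hk; apply: val_inj; rewrite /= /bump leq0n add1n !inordK.
rewrite /path_mass (reindex cons); last by exists uncons.
under [RHS]eq_bigr do rewrite big_distrl.
rewrite [RHS]exchange_big pair_big /=.
apply: eq_big => [p|p _].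
  apply/forallP/andP => [alive_w|[alive_x /forallP alive_w] i].
    split; first by rewrite -cons0; apply: alive_w.
    by apply/forallP => k; rewrite -cons_lift; apply: alive_w.
  by case: (unliftP ord0 i) => [k ->|->]; rewrite ?cons_lift ?cons0.
rewrite cons0 big_ord_recl -mulrA; congr (_ * (_ * _)).
  have -> : (inord 0 : 'I_n.+2) = ord0 by apply: val_inj; rewrite /= inordK.
  have -> : (inord 1 : 'I_n.+2) = lift ord0 ord0 by apply: val_inj; rewrite /= inordK.
  by rewrite cons0 cons_lift.
apply: eq_bigr => i _.
have hi : (i < n.+1)%N by apply: leq_trans (ltn_ord i) _.
by rewrite /= /bump leq0n add1n !inord_lift ?ltnS // !cons_lift.
Qed.

Variables (H : T -> R) (a : R).
Hypothesis K_ge0 : forall x y, alive x -> 0 <= K x y.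
Hypothesis a_ge0 : 0 <= a.
Hypothesis H_ge1 : forall x, alive x -> 1 <= H x.
Hypothesis drift :
  forall x, alive x -> \sum_(y | alive y) K x y * H y <= a * H x.

Lemma path_mass_drift (n : nat) (mu : T -> R) : (forall x, 0 <= mu x) ->
  path_mass n mu <= a ^+ n * \sum_(x | alive x) mu x * H x.
Proof.
elim: n mu => [|n IH] mu mu_ge0.
  rewrite path_mass0 expr0 mul1r; apply: ler_sum => x alive_x.
  by rewrite -{1}[mu x]mulr1 ler_wpM2l ?H_ge1.
rewrite path_massS; apply: le_trans (IH _ _) _.
  by move=> y; apply: sumr_ge0 => x alive_x; rewrite mulr_ge0 ?K_ge0.
rewrite exprSr -mulrA ler_wpM2l ?exprn_ge0 //.
under eq_bigr do rewrite big_distrl.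
rewrite exchange_big /= mulr_sumr; apply: ler_sum => x alive_x.
under eq_bigr do rewrite -mulrA.
by rewrite -mulr_sumr mulrCA ler_wpM2l ?drift.
Qed.

End KilledPaths.


Lemma survival_path_mass (R : realType) (N n : nat) (mu : 'I_(N - 3) -> R) :
  @survival R N n mu =
  path_mass (checkP R (N:=N)) (fun x : 'I_(N - 3) => (x : nat) != 0%N) n mu.
Proof. by []. Qed.

(* Every point of {0,...,N-1} is fixed or lies in at most one 2-cycle, so
   2 eta2 + eta1 <= N. *)
Lemma eta_bound (N : nat) (s : 'S_N) : (2 * eta2 s + eta1 s <= N)%N.
Proof.
rewrite /eta2 /eta1; set Q := [set C in porbits s | #|C| == 2%N].
have twice_Q : (2 * #|Q| = \sum_(i < N) \sum_(C in Q) (i \in C))%N.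
  rewrite exchange_big /= mulnC -sum_nat_const; apply: eq_bigr => C.
  rewrite inE => /andP[_ /eqP <-].
  by rewrite -sum1_card big_mkcond /=; apply: eq_bigr => i _; case: (i \in C).
have fixed_sum : #|[set i | s i == i]| = (\sum_(i < N) (s i == i))%N.
  by rewrite -sum1_card big_mkcond /=; apply: eq_bigr => i _; rewrite inE; case: (s i == i).
rewrite twice_Q fixed_sum -big_split /=.
rewrite -[X in (_ <= X)%N]card_ord -sum1_card; apply: leq_sum => i _.
have orbit_of_i C : C \in Q -> i \in C -> C = porbit s i.
  rewrite inE => /andP[/imsetP[y _ ->] _] hi.
  by apply/eqP; rewrite eq_sym eq_porbit_mem.
case: (boolP (s i == i)) => [/eqP i_fixed|_]; last first.
  rewrite addn0 (@leq_trans (\sum_(C : {set 'I_N}) (C == porbit s i))) //.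
    rewrite [X in (X <= _)%N]big_mkcond /=; apply: leq_sum => C _.
    case: (boolP (C \in Q)) => // CQ; case: (boolP (i \in C)) => // hi.
    by rewrite (orbit_of_i C CQ hi) eqxx.
  by rewrite -big_mkcond /= big_pred1_eq.
rewrite big1 //= => C CQ; case: (boolP (i \in C)) => // hi.
have := CQ; rewrite (orbit_of_i C CQ hi) inE => /andP[_ /eqP orbit2].
have : (#|porbit s i| <= 1)%N.
  rewrite -(cards1 i); apply: subset_leq_card; apply/fintype.subsetP => y /porbitP[k ->].
  by rewrite permX (iter_fix _ i_fixed) set11.
by rewrite orbit2.
Qed.

Section Rates.
Variable R : realType.

Lemma pcond_ge0 (N x : nat) : 0 <= pcond R N x.
Proof. by rewrite /pcond divr_ge0 // sumr_ge0. Qed.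

(* Averaging eta_bound over {eta1 = x}: 2 p(x) <= N - x. *)
Lemma pcond_le (N x : nat) : (x <= N)%N -> 2 * pcond R N x <= N%:R - x%:R.
Proof.
move=> hx; rewrite /pcond; set c := #|[set s : 'S_N | eta1 s == x]|.
have sum_le : (2 * \sum_(s : 'S_N | eta1 s == x) eta2 s <= c * (N - x))%N.
  rewrite big_distrr /= /c -sum_nat_const.
  rewrite [X in (_ <= X)%N](eq_bigl (fun s : 'S_N => eta1 s == x)) => [|s]; last by rewrite inE.
  by apply: leq_sum => s /eqP hs; have := eta_bound s; rewrite -hs; lia.
have sum_leR : 2 * (\sum_(s : 'S_N | eta1 s == x) (eta2 s)%:R) <= c%:R * (N%:R - x%:R) :> R.
  by rewrite -natrB // -natrM -natr_sum -(natrM R 2) ler_nat.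
have [->|c_gt0] := posnP c; first by rewrite invr0 !mulr0 subr_ge0 ler_nat.
by rewrite mulrA ler_pdivrMr ?ltr0n // [_ * c%:R]mulrC.
Qed.

(* The common scale of both jump rates out of x: (N - x)/(N(N - 1)). *)
Definition flow_rate (N x : nat) : R := (N%:R - x%:R) / (N%:R * (N%:R - 1)).

Lemma flow_rate_facts (N x : nat) : (1 < N)%N -> (x <= N)%N ->
  0 <= flow_rate N x /\ flow_rate N x * (N%:R * (N%:R - 1)) = N%:R - x%:R.
Proof.
move=> hN hx; have hn : 2 <= N%:R :> R by rewrite (ler_nat R 2).
have D_gt0 : 0 < N%:R * (N%:R - 1) :> R by nra.
by rewrite divr_ge0 ?subr_ge0 ?ler_nat ?ltW // divfK ?lt0r_neq0.
Qed.

Lemma down_rateE (N x : nat) : (0 < x)%N -> (x <= N)%N ->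
  down_rate R N x = x%:R * flow_rate N x.
Proof.
move=> x_gt0 hx; have hN : (1 <= N)%N by apply: leq_trans hx.
by rewrite /down_rate x_gt0 natrM natrB // natrM natrB // mulrA.
Qed.

(* The up-rate is nonnegative because 2 p(x) <= N - x. *)
Lemma up_rate_ge0 (N x : nat) : (x <= N)%N -> 0 <= up_rate R N x.
Proof.
move=> hx; rewrite /up_rate; case: ifP => _ //.
by rewrite divr_ge0 //; have := pcond_le hx; lra.
Qed.

(* Since p(x) >= 0, the up-rate never exceeds the flow rate. *)
Lemma up_rate_le (N x : nat) : (1 < N)%N -> (x <= N)%N ->
  up_rate R N x <= flow_rate N x.
Proof.
move=> hN hx; have [W_ge0 _] := flow_rate_facts hN hx.
rewrite /up_rate /flow_rate; case: ifP => // _.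
rewrite natrM natrB ?(ltnW hN) // ler_pM2r ?invr_gt0 ?mulr_gt0 ?subr_gt0 ?ltr0n ?ltr1n //.
  by have := pcond_ge0 N x; lra.
exact: ltnW.
Qed.

(* checkP is a genuine transition kernel on alive rows: the holding
   probability 1 - x W - u is nonnegative since (x + 1) W <= 1. *)
Lemma checkP_ge0 (N : nat) (x y : 'I_(N - 3)) : (10 <= N)%N -> (0 < x)%N ->
  0 <= checkP R x y.
Proof.
move=> HN x_gt0; have hxN : (x + 4 <= N)%N by have := ltn_ord x; lia.
have hx : (x <= N)%N by lia.
have hN : (1 < N)%N by lia.
have [W_ge0 W_def] := flow_rate_facts hN hx.
have u_le := up_rate_le hN hx; have u_ge0 := up_rate_ge0 hx.
rewrite /checkP (down_rateE x_gt0 hx).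
have hn : 10 <= N%:R :> R by rewrite ler_nat.
have hX : 1 <= x%:R :> R by rewrite (ler_nat R 1).
have hXn : x%:R + 4 <= N%:R :> R by rewrite -natrD ler_nat.
have hD : 0 < N%:R * (N%:R - 1) :> R by nra.
have stay : (x%:R + 1) * flow_rate N x <= 1.
  by rewrite -(ler_pM2r hD) mul1r -mulrA W_def; nra.
by case: ifP => _; [nra | case: ifP => _; [nra | case: ifP]].
Qed.

End Rates.

Section Drift.
Variable R : realType.

Lemma sum_ord_indicator (m k : nat) (c : R) :
  \sum_(y < m) (if (y : nat) == k then c else 0) = if (k < m)%N then c else 0.
Proof.
case: ltnP => hk.
  rewrite (bigD1 (Ordinal hk)) //= eqxx big1 ?addr0 // => y hy.
  by case: eqP => // hyk; case/eqP: hy; apply: val_inj.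
by rewrite big1 // => y _; case: eqP => // hyk; move: (ltn_ord y); rewrite hyk ltnNge hk.
Qed.

Lemma killed_step_sum (N : nat) (x : 'I_(N - 3)) (F : nat -> R) : (0 < x)%N ->
  \sum_(y : 'I_(N - 3) | (y : nat) != 0%N) checkP R x y * F y =
    (1 - down_rate R N x - up_rate R N x) * F x
  + down_rate R N x * (if x.-1 == 0%N then 0 else F x.-1)
  + up_rate R N x * F x.+1.
Proof.
move=> x_gt0; set d := down_rate R N x; set u := up_rate R N x.
pose G k := if k == 0%N then 0 else F k.
have split_checkP (y : 'I_(N - 3)) : checkP R x y =
    (if (y : nat) == x then 1 - d - u else 0)
  + (if (y : nat) == x.-1 then d else 0)
  + (if (y : nat) == x.+1 then u else 0).
  rewrite /checkP -val_eqE /=; move: (y : nat) => k.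
  by case: (k =P x) => ?; case: (k =P x.-1) => ?; case: (k =P x.+1) => ?;
    rewrite ?addr0 ?add0r //; exfalso; lia.
have if_mul (k j : nat) (c : R) :
    (if k == j then c else 0) * G k = if k == j then c * G j else 0.
  by case: eqP => [->|_]; rewrite ?mul0r.
rewrite big_mkcond /= (eq_bigr (fun y => checkP R x y * G y)) => [|y _]; last first.
  by rewrite /G; case: eqP; rewrite ?mulr0.
under eq_bigr do rewrite split_checkP !mulrDl !if_mul.
rewrite !big_split /= !sum_ord_indicator.
have -> : (x.-1 < N - 3)%N by have := ltn_ord x; lia.
have -> : G x = F x by rewrite /G; case: eqP => //; lia.
rewrite ltn_ord /G /=; case: ltnP => // x_top.
by rewrite /u /up_rate ifF ?mul0r //; apply/negbTE; rewrite -ltnNge; lia.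
Qed.

Definition lyap (N k : nat) : R := (N%:R + k%:R - 1) / N%:R.

Lemma lyap_bounds (N k : nat) : (10 <= N)%N -> (0 < k)%N -> (k <= N)%N ->
  1 <= lyap N k /\ lyap N k <= 2.
Proof.
move=> HN k_gt0 hk; have hn : 10 <= N%:R :> R by rewrite ler_nat.
have hK : 1 <= k%:R :> R by rewrite (ler_nat R 1).
have hKN : k%:R <= N%:R :> R by rewrite ler_nat.
by rewrite /lyap ler_pdivlMr ?ler_pdivrMr; first split; lra.
Qed.

(* Drift inequality away from the boundary (x >= 2): with W the flow rate,
   the down-rate is x W and the up-rate u <= W. *)
Lemma drift_ineq_interior (n X W u : R) : 10 <= n -> 2 <= X -> X + 4 <= n ->
  0 <= W -> W * (n * (n - 1)) = n - X -> u <= W ->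
  (1 - X * W - u) * ((n + X - 1) / n) + X * W * ((n + (X - 1) - 1) / n)
   + u * ((n + (X + 1) - 1) / n) <= (1 - (n ^+ 3)^-1) * ((n + X - 1) / n).
Proof.
move=> hn hX hXn hW hWD hup; have n0 : n != 0 by apply/eqP; lra.
have gain : n + X - 1 <= (X * W - u) * n ^+ 3.
  have h1 : W <= X * W - u by nra.
  have h2 : n + X - 1 <= W * n ^+ 3 by rewrite !exprS expr0; nra.
  by apply: le_trans h2 _; rewrite ler_pM2r // exprn_gt0 //; lra.
rewrite -subr_ge0.
have -> : (1 - (n ^+ 3)^-1) * ((n + X - 1) / n) -
   ((1 - X * W - u) * ((n + X - 1) / n) + X * W * ((n + (X - 1) - 1) / n)
   + u * ((n + (X + 1) - 1) / n)) = ((X * W - u) * n ^+ 3 - (n + X - 1)) / n ^+ 4.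
  by field.
by rewrite divr_ge0 ?subr_ge0 // exprn_ge0 //; lra.
Qed.

(* Drift inequality at x = 1, where a down-jump kills the chain. *)
Lemma drift_ineq_at_one (n W u : R) : 10 <= n -> 0 <= W ->
  W * (n * (n - 1)) = n - 1 -> u <= W ->
  (1 - 1 * W - u) * ((n + 1 - 1) / n) + 1 * W * 0
   + u * ((n + (1 + 1) - 1) / n) <= (1 - (n ^+ 3)^-1) * ((n + 1 - 1) / n).
Proof.
move=> hn hW hWD hup; have n0 : n != 0 by apply/eqP; lra.
have Wn : W * n = 1.
  apply: (@mulIf _ (n - 1)); first by apply/eqP; lra.
  by rewrite -mulrA hWD mul1r.
have gain : 1 <= W * n ^+ 3 - u * n ^+ 2 by rewrite !exprS expr0; nra.
rewrite -subr_ge0.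
have -> : (1 - (n ^+ 3)^-1) * ((n + 1 - 1) / n) -
   ((1 - 1 * W - u) * ((n + 1 - 1) / n) + 1 * W * 0
   + u * ((n + (1 + 1) - 1) / n)) = (W * n ^+ 3 - u * n ^+ 2 - 1) / n ^+ 3.
  by field.
by rewrite divr_ge0 ?subr_ge0 // exprn_ge0 //; lra.
Qed.

Lemma checkP_drift (N : nat) (x : 'I_(N - 3)) : (10 <= N)%N -> (0 < x)%N ->
  \sum_(y : 'I_(N - 3) | (y : nat) != 0%N) checkP R x y * lyap N y
    <= (1 - (N%:R ^+ 3)^-1) * lyap N x.
Proof.
move=> HN x_gt0; rewrite killed_step_sum //.
have hxN : (x + 4 <= N)%N by have := ltn_ord x; lia.
have hx : (x <= N)%N by lia.
have hN : (1 < N)%N by lia.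
have hn : 10 <= N%:R :> R by rewrite ler_nat.
have hXn : x%:R + 4 <= N%:R :> R by rewrite -natrD ler_nat.
have [W_ge0 W_def] := flow_rate_facts R hN hx.
have u_le := up_rate_le R hN hx.
rewrite (down_rateE R x_gt0 hx) /lyap -natr1.
have [x_lt1|x_gt1|x_eq1] := ltngtP x 1; first by lia.
- have hX : 2 <= x%:R :> R by rewrite (ler_nat R 2).
  rewrite ifF; last by apply/eqP; lia.
  by rewrite -subn1 natrB; [apply: drift_ineq_interior | lia].
- by rewrite x_eq1 /= in W_ge0 W_def hXn u_le *; apply: drift_ineq_at_one.
Qed.

End Drift.

Lemma expn_le_expR (R : realType) (t : R) (n : nat) : 0 <= 1 - t ->
  (1 - t) ^+ n <= expR (- (n%:R * t)).
Proof.
move=> t_le1; rewrite -mulrN expRM_natl; apply: lerXn2r; rewrite ?inE ?t_le1 //.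
  exact: ltW (expR_gt0 _).
by have := expR_ge1Dx (- t); lra.
Qed.

Theorem lemma5p8 (R : realType) :
  exists c : R, 0 < c /\
  exists N0 : nat, forall N : nat, (N0 <= N)%N ->
    forall (n : nat) (mu : 'I_(N - 3) -> R),
      (forall x, 0 <= mu x) -> \sum_x mu x = 1 ->
      @survival R N n mu <= expR (1 - c * n%:R / (N%:R ^+ 3)).
Proof.
exists 1; split; first lra.
exists 10%N => N HN n mu mu_ge0 mu_sum.
have hn : 10 <= N%:R :> R by rewrite ler_nat.
have N3_ge1 : 1 <= N%:R ^+ 3 :> R by rewrite exprn_ege1 //; lra.
have a_ge0 : 0 <= 1 - (N%:R ^+ 3)^-1 :> R by rewrite subr_ge0 invf_le1 //; lra.
have lyap_alive (x : 'I_(N - 3)) : (x : nat) != 0%N ->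
    1 <= lyap R N x /\ lyap R N x <= 2.
  by rewrite -lt0n => x_gt0; apply: lyap_bounds => //; have := ltn_ord x; lia.
rewrite survival_path_mass.
apply: le_trans (path_mass_drift (H := fun x : 'I_(N - 3) => lyap R N x) _ a_ge0 _ _ n mu_ge0) _.
- by move=> x y x_alive; apply: checkP_ge0; rewrite ?lt0n.
- by move=> x /lyap_alive[].
- by move=> x x_alive; apply: checkP_drift; rewrite ?lt0n.
have start_le : \sum_(x : 'I_(N - 3) | (x : nat) != 0%N) mu x * lyap R N x <= expR 1.
  apply: le_trans (_ : 2 <= _); last by have := expR_ge1Dx (1 : R); lra.
  apply: (@le_trans _ _ (\sum_x mu x * 2)); last by rewrite -big_distrl /= mu_sum mul1r.
  rewrite big_mkcond /=.
  apply: ler_sum => x _; case: ifP => [/lyap_alive[_ H2]|_]; last by rewrite mulr_ge0.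
  by rewrite ler_wpM2l.
rewrite mul1r expRD mulrC.
apply: ler_pM => //.
- by apply: sumr_ge0 => x /lyap_alive[H1 _]; rewrite mulr_ge0 //; lra.
- exact: exprn_ge0.
- exact: expn_le_expR.
Qed.
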